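(* Let $\mathcal C\subseteq\mathbb F_2^n$ be a binary linear code, $\prec$ an admissible order on $[X]$, and $(N,G)$ the output of Algorithm R for $\mathcal C$ and $<_e$. Let $\to$ be one-step reduction modulo $G$ and $\overset{*}{\to}$ its reflexive-transitive closure. Then: (i) there is no infinite sequence $w_0\to w_1\to w_2\to\cdots$ (the reduction is noetherian); (ii) for any $w\in[X]$, if $w\overset{*}{\to}w_1$ and $w\overset{*}{\to}w_2$ with $w_1,w_2$ irreducible, then $w_1=w_2$; (iii) every irreducible word belongs to $N$; (iv) if $w\overset{*}{\to}w'$ then $\xi(w)=\xi(w')$.
   Context: Binary setting: $[X]$ is the free commutative monoid on $X=\{x_1,\dots,x_n\}$; $\psi:[X]\to\mathbb F_2^n$ sends $\prod x_i^{\beta_i}$ to $(\beta_i\bmod 2)_i$; $\mathcal C$ has dimension $k$ and parity check matrix $H$ ($n\times(n-k)$, $\mathcal C=\{c:cH=0\}$); syndrome $\xi(w)=\psi(w)H$. A word is standard if all exponents are $<2$; the standard form of $w$ is obtained by reducing all exponents mod 2. $\mathrm{Ind}(w)=\{i:x_i\mid w\}$. Error-vector order: $u<_e w$ iff $|\mathrm{Ind}(u)|<|\mathrm{Ind}(w)|$, or equality and $u\prec w$. Algorithm R: keep a list $L$ of words sorted increasingly by $<_e$, a set $N$ and a set $G$ of binomials; initially $L=(1)$, $N=G=\emptyset$. While $L\ne\emptyset$: remove the $<_e$-smallest $w$ from $L$; if $w$ is divisible by the leading word of some binomial of $G$, discard it; otherwise, if some $w'\in N$ has $\xi(w')=\xi(w)$,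 add the binomial $w-w'$ to $G$ with leading word $T(w-w')=w$; else add $w$ to $N$ and insert all $wx$ ($x\in X$) into $L$. Output $(N,G)$. One-step reduction modulo $G$: if $w$ is not standard, $w\to$ (standard form of $w$); if $w$ is standard and $w=us$ where $u-u'\in G$ has leading word $u$, then $w\to u's$. A word is irreducible if no one-step reduction applies to it. *)

From HB Require Import structures.
From mathcomp Require Import all_boot all_order all_algebra.
Set Implicit Arguments. Unset Strict Implicit. Unset Printing Implicit Defensive.
Import GRing.Theory.
Local Open Scope ring_scope.

(* Words of the free commutative monoid [X], X = {x_1,...,x_n}, represented
   by their exponent vectors; the product is pointwise addition. *)
Definition word (n : nat) := {ffun 'I_n -> nat}.

Definition onew {n} : word n := [ffun _ => 0%N].
Definition mulw {n} (u v : word n) : word n := [ffun i => (u i + v i)%N].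
Definition varw {n} (i : 'I_n) : word n := [ffun j => nat_of_bool (j == i)].

Definition psi {n} (w : word n) : 'rV['F_2]_n := \row_i ((w i %% 2)%N%:R).
Definition syn {n m} (H : 'M['F_2]_(n, m)) (w : word n) : 'rV['F_2]_m :=
  psi w *m H.

Definition standard {n} (w : word n) : bool := [forall i, (w i < 2)%N].
Definition stdform {n} (w : word n) : word n := [ffun i => (w i %% 2)%N].
Definition Ind {n} (w : word n) : {set 'I_n} := [set i | (0 < w i)%N].
Definition dividesw {n} (u w : word n) : Prop := exists s, w = mulw u s.

Definition admissible {n} (prec : rel (word n)) : Prop :=
  [/\ (forall u, ~~ prec u u),
      (forall u v w, prec u v -> prec v w -> prec u w),
      (forall u v, u != v -> prec u v || prec v u),
      (forall u, u != onew -> prec onew u)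
    & (forall u v s, prec u v -> prec (mulw u s) (mulw v s))].

Definition lt_e {n} (prec : rel (word n)) (u w : word n) : bool :=
  (#|Ind u| < #|Ind w|)%N || ((#|Ind u| == #|Ind w|) && prec u w).

(* Algorithm R.  State = (L, N, G); a binomial w - w' with leading word w is
   stored as the pair (w, w').  L is treated as a set: removing w removes
   every copy of w. *)
Definition stateR n := (seq (word n) * seq (word n) * seq (word n * word n))%type.

Inductive Rstep {n m} (prec : rel (word n)) (H : 'M['F_2]_(n, m)) :
  stateR n -> stateR n -> Prop :=
| Rdiscard L N G w :
    w \in L -> (forall u, u \in L -> u = w \/ lt_e prec w u) ->
    (exists2 g, g \in G & dividesw g.1 w) ->
    Rstep prec H (L, N, G) ([seq u <- L | u != w], N, G)
| Rbinom L N G w w' :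
    w \in L -> (forall u, u \in L -> u = w \/ lt_e prec w u) ->
    ~ (exists2 g, g \in G & dividesw g.1 w) ->
    w' \in N -> syn H w' = syn H w ->
    Rstep prec H (L, N, G) ([seq u <- L | u != w], N, rcons G (w, w'))
| Rnew L N G w :
    w \in L -> (forall u, u \in L -> u = w \/ lt_e prec w u) ->
    ~ (exists2 g, g \in G & dividesw g.1 w) ->
    (forall w', w' \in N -> syn H w' != syn H w) ->
    Rstep prec H (L, N, G)
      ([seq u <- L | u != w] ++ [seq mulw w (varw i) | i <- enum 'I_n],
       rcons N w, G).

Inductive star {T} (r : T -> T -> Prop) : T -> T -> Prop :=
| star_refl x : star r x x
| star_step x y z : r x y -> star r y z -> star r x z.

Definition outputR {n m} (prec : rel (word n)) (H : 'M['F_2]_(n, m))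
  (N : seq (word n)) (G : seq (word n * word n)) : Prop :=
  star (Rstep prec H) ([:: onew], [::], [::]) ([::], N, G).

Inductive redG {n} (G : seq (word n * word n)) : word n -> word n -> Prop :=
| red_std w : ~~ standard w -> redG G w (stdform w)
| red_bin w u u' s :
    standard w -> (u, u') \in G -> w = mulw u s -> redG G w (mulw u' s).

Definition irreducible {n} (G : seq (word n * word n)) (w : word n) : Prop :=
  forall w', ~ redG G w w'.

From HB Require Import structures.
From mathcomp Require Import all_boot all_order all_algebra.
From mathcomp Require Import zify.
Set Implicit Arguments. Unset Strict Implicit. Unset Printing Implicit Defensive.

(* Each reduction step strictly decreases a word for <_e: reducing exponents
   mod 2 divides the word by a nontrivial factor, and replacing the leading
   word u of a binomial by some u' <_e u inside a standard word u s cannot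
   enlarge the support.  Of two consecutive words of a reduction chain one is
   standard, and there are only 2^n standard words, so chains are finite.
   Algorithm R only creates binomials between words of equal syndrome and keeps
   the syndromes of N pairwise distinct; hence reduction preserves syndromes,
   and irreducible forms are unique as soon as they lie in N.  That they do is
   shown by induction on the support: the divisor v of an irreducible word
   v x_i is irreducible, hence in N, so v x_i was queued in L; no leading word
   divides it, so it was eventually added to N. *)

Lemma star_preserved T (R : T -> T -> Prop) (P : T -> Prop) :
  (forall s t, R s t -> P s -> P t) -> forall s t, star R s t -> P s -> P t.
Proof. by move=> RP s t; elim=> // x y z Rxy _ IH /(RP _ _ Rxy). Qed.

Lemma descending_chain_injective T (r : rel T) (f : nat -> T) :
  irreflexive r -> transitive r -> (forall i, r (f i.+1) (f i)) -> injective f.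
Proof.
move=> r_irr r_trans f_desc.
have f_mono : {homo f : i j / (i < j)%N >-> r j i}.
  by apply: (homo_ltn (r := fun x y => r y x)) => // y x z rxy ryz; exact: r_trans ryz rxy.
move=> i j fij; case: (ltngtP i j) => // [/f_mono | /f_mono]; by rewrite fij r_irr.
Qed.

Lemma not_injective_in_seq (T : eqType) (s : seq T) (g : nat -> T) :
  (forall q, g q \in s) -> ~ injective g.
Proof.
move=> g_s g_inj.
have : (size s).+1 <= size s.
  rewrite -[X in X <= _](size_iota 0) -(size_map g).
  by apply: uniq_leq_size => [|_ /mapP[q _ ->]]; rewrite ?map_inj_uniq ?iota_uniq.
by rewrite ltnn.
Qed.

Section Words.
Variable n : nat.
Implicit Types u v w s : word n.

Lemma mulwC u v : mulw u v = mulw v u.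
Proof. by apply/ffunP=> i; rewrite !ffunE addnC. Qed.

Lemma mul1w u : mulw onew u = u.
Proof. by apply/ffunP=> i; rewrite !ffunE. Qed.

Lemma mulw1 u : mulw u onew = u.
Proof. by rewrite mulwC mul1w. Qed.

Lemma mulwA u v w : mulw (mulw u v) w = mulw u (mulw v w).
Proof. by apply/ffunP=> i; rewrite !ffunE addnA. Qed.

Lemma Ind_mulw u v : Ind (mulw u v) = Ind u :|: Ind v.
Proof. by apply/setP=> i; rewrite !inE ffunE addn_gt0. Qed.

Lemma varw_neq1 (i : 'I_n) : varw i != onew.
Proof. by apply/eqP=> /ffunP/(_ i); rewrite !ffunE eqxx. Qed.

Lemma standard_stdform w : standard (stdform w).
Proof. by apply/forallP=> i; rewrite ffunE ltn_pmod. Qed.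

Lemma stdform_divides w : ~~ standard w -> exists2 t, t != onew & w = mulw (stdform w) t.
Proof.
rewrite /standard negb_forall => /existsP[i]; rewrite -leqNgt => w_i.
exists [ffun j => w j - w j %% 2].
  apply/eqP=> /ffunP/(_ i); rewrite !ffunE => /eqP; rewrite subn_eq0.
  by have := ltn_pmod (w i) (isT : 0 < 2); lia.
by apply/ffunP=> j; rewrite !ffunE subnKC // leq_mod.
Qed.

Lemma standard_split w : standard w -> w != onew ->
  exists v (i : 'I_n), w = mulw v (varw i) /\ (#|Ind v| < #|Ind w|)%N.
Proof.
move=> w_std w_neq1.
have [i w_i] : exists i, (0 < w i)%N.
  apply/existsP; apply: contraR w_neq1 => /existsPn w0.
  by apply/eqP/ffunP=> i; rewrite ffunE; move: (w0 i); rewrite lt0n negbK => /eqP.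
exists [ffun j => if j == i then 0%N else w j], i; split.
  apply/ffunP=> j; rewrite !ffunE; case: (eqVneq j i) => [->|_]; last by rewrite addn0.
  by have := forallP w_std i; rewrite add0n /=; lia.
apply: proper_card; apply/properP; split.
  by apply/subsetP=> j; rewrite !inE ffunE; case: ifP.
by exists i; rewrite !inE ?ffunE ?eqxx.
Qed.

Lemma not_injective_standard (g : nat -> word n) :
  (forall q, standard (g q)) -> ~ injective g.
Proof.
move=> g_std; pose bits := enum {ffun 'I_n -> bool}.
apply: (@not_injective_in_seq (word n)
  [seq [ffun i => nat_of_bool (b i)] | b : {ffun 'I_n -> bool} <- bits]) => q.
apply/mapP; exists [ffun i => g q i == 1%N]; rewrite ?mem_enum //.
by apply/ffunP=> i; rewrite !ffunE; move: (forallP (g_std q) i); case: (g q i) => [|[]].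
Qed.

Variable m : nat.
Variable H : 'M['F_2]_(n, m).

Lemma syn_mulw u v : syn H (mulw u v) = (syn H u + syn H v)%R.
Proof.
rewrite /syn -mulmxDl; congr mulmx.
by apply/rowP=> i; rewrite !mxE ffunE !Fp_nat_mod // GRing.natrD.
Qed.

Lemma syn_stdform w : syn H (stdform w) = syn H w.
Proof. by rewrite /syn; congr mulmx; apply/rowP=> i; rewrite !mxE ffunE modn_mod. Qed.

End Words.

Section ErrorOrder.
Variables (n : nat) (prec : rel (word n)).
Hypothesis adm : admissible prec.
Implicit Types u v w s : word n.

Lemma lt_e_irr : irreflexive (lt_e prec).
Proof. by case: adm => irr _ _ _ _ u; rewrite /lt_e ltnn eqxx /= (negbTE (irr u)). Qed.

Lemma lt_e_trans : transitive (lt_e prec).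
Proof.
case: adm => _ tr _ _ _ v u w; rewrite /lt_e.
case/orP=> [h1|/andP[/eqP e1 p1]]; case/orP=> [h2|/andP[/eqP e2 p2]].
- by rewrite (ltn_trans h1 h2).
- by rewrite -e2 h1.
- by rewrite e1 h2.
- by rewrite e1 e2 eqxx (tr _ _ _ p1 p2) orbT.
Qed.

Lemma lt_e_mulw w s : s != onew -> lt_e prec w (mulw w s).
Proof.
case: adm => _ _ _ one mul s_neq1.
rewrite /lt_e ltn_neqAle subset_leq_card ?Ind_mulw ?subsetUl // andbT.
case: eqP => //= _.
by have := mul _ _ w (one _ s_neq1); rewrite mul1w mulwC.
Qed.

Lemma lt_e_stdform w : ~~ standard w -> lt_e prec (stdform w) w.
Proof. by case/stdform_divides=> t t_neq1 {2}->; exact: lt_e_mulw. Qed.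

(* In a standard word u s the supports of u and s are disjoint, so u s has
   maximal support among the products u' s with #|Ind u'| <= #|Ind u|. *)
Lemma lt_e_mulw2r u u' s : standard (mulw u s) ->
  lt_e prec u' u -> lt_e prec (mulw u' s) (mulw u s).
Proof.
case: adm => _ _ _ _ mul us_std.
have disj : Ind u :&: Ind s = set0.
  apply/setP=> i; rewrite !inE; apply/negbTE/negP=> /andP[ui si].
  by move/forallP: us_std => /(_ i); rewrite ffunE; lia.
have card_us : #|Ind (mulw u s)| = (#|Ind u| + #|Ind s|)%N.
  by rewrite Ind_mulw -cardsUI disj cards0 addn0.
have card_u's : (#|Ind (mulw u' s)| <= #|Ind u'| + #|Ind s|)%N.
  by rewrite Ind_mulw -cardsUI leq_addr.
rewrite /lt_e card_us => /orP[lt_u'u | /andP[/eqP e p]].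
  by rewrite (leq_ltn_trans card_u's) // ltn_add2r.
rewrite -e ltn_neqAle card_u's andbT.
by case: eqP => //= _; exact: mul.
Qed.

End ErrorOrder.

Section Reduction.
Variables (n : nat) (G : seq (word n * word n)).
Implicit Types u v w : word n.

Definition lead_divides w := exists2 g, g \in G & dividesw g.1 w.

Lemma irreducible_standard w : irreducible G w -> standard w.
Proof. by move=> w_irr; apply/negPn/negP=> /(red_std G)/w_irr. Qed.

Lemma irreducible_lead_divides w : irreducible G w -> ~ lead_divides w.
Proof.
move=> w_irr [[u u'] gG [s w_us]].
exact: w_irr _ (red_bin (irreducible_standard w_irr) gG w_us).
Qed.

Lemma irreducible_divisor v x : irreducible G (mulw v x) -> irreducible G v.
Proof.
move=> vx_irr v' red_v; have vx_std := irreducible_standard vx_irr.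
case: v v' / red_v vx_irr vx_std => [v v_nstd | v u u' s _ gG ->] vx_irr vx_std.
- move: v_nstd; apply/negP/negPn/forallP=> i.
  by move/forallP: vx_std => /(_ i); rewrite ffunE; lia.
- by apply: (vx_irr (mulw u' (mulw s x))); apply: (red_bin vx_std gG); rewrite mulwA.
Qed.

Lemma redG_nonstandard w w' : redG G w w' -> ~~ standard w -> standard w'.
Proof. by case=> [u _ _ | u a b s u_std _ _]; [exact: standard_stdform | rewrite u_std]. Qed.

Lemma redG_lt_e prec w w' : admissible prec ->
  {in G, forall g, lt_e prec g.2 g.1} -> redG G w w' -> lt_e prec w' w.
Proof.
move=> adm G_lt [u u_nstd | u a b s u_std gG u_bs]; first exact: lt_e_stdform.
by rewrite u_bs in u_std *; apply: (@lt_e_mulw2r n prec adm a b s u_std); exact: G_lt gG.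
Qed.

Lemma star_redG_syn m (H : 'M['F_2]_(n, m)) w w' :
  {in G, forall g, syn H g.1 = syn H g.2} -> star (redG G) w w' -> syn H w = syn H w'.
Proof.
move=> G_syn; elim=> {w w'} // w v w' red_w _ <-.
case: red_w => [u _ | u a b s _ gG ->]; first by rewrite syn_stdform.
by rewrite !syn_mulw (G_syn _ gG).
Qed.

End Reduction.

Section AlgorithmR.
Variables (n m : nat) (H : 'M['F_2]_(n, m)) (prec : rel (word n)).
Implicit Types (w x : word n) (s t : stateR n).

Definition covered G (N : seq (word n)) x := lead_divides G x \/ x \in N.

Definition settled x s := let: (L, N, G) := s in x \in L \/ covered G N x.

Definition successors_settled s :=
  let: (L, N, G) := s in forall v i, v \in N -> settled (mulw v (varw i)) (L, N, G).

Definition R_invariant s := let: (L, N, G) := s in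
  [/\ {in G, forall g, syn H g.1 = syn H g.2},
      {in N &, injective (syn H)},
      {in G, forall g, lt_e prec g.2 g.1}
    & {in N & L, forall a x, lt_e prec a x}].

Lemma covered_sub G G' N N' x : {subset G <= G'} -> {subset N <= N'} ->
  covered G N x -> covered G' N' x.
Proof. by move=> sG sN [[g /sG gG' g_x] | /sN xN']; [left; exists g | right]. Qed.

Lemma Rstep_settled s t x : Rstep prec H s t -> settled x s -> settled x t.
Proof.
have rcons_sub (T : eqType) (r : seq T) y : {subset r <= rcons r y}.
  exact: mem_subseq (subseq_rcons r y).
case=> [L N G w _ _ w_div | L N G w w' _ _ _ _ _ | L N G w _ _ _ _] /=.
- case=> [xL | ]; last by right.
  by have [->|xw] := eqVneq x w; [right; left | left; rewrite mem_filter xw].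
- case=> [xL | x_cov]; last by right; apply: covered_sub x_cov.
  have [-> | xw] := eqVneq x w; last by left; rewrite mem_filter xw.
  by right; left; exists (w, w'); [rewrite mem_rcons mem_head | exists onew; rewrite mulw1].
- case=> [xL | x_cov]; last by right; apply: covered_sub x_cov.
  have [-> | xw] := eqVneq x w; first by right; right; rewrite mem_rcons mem_head.
  by left; rewrite mem_cat mem_filter xw xL.
Qed.

Lemma Rstep_successors_settled s t :
  Rstep prec H s t -> successors_settled s -> successors_settled t.
Proof.
move=> st; have settled_t x : settled x s -> settled x t := Rstep_settled st.
move: settled_t; case: st => [L N G w _ _ _ | L N G w w' _ _ _ _ _ | L N G w _ _ _ _]
  /= settled_t N_succ v i; [exact: (settled_t _ \o N_succ v i).. |].
rewrite mem_rcons inE => /orP[/eqP-> | /(N_succ _ i)/settled_t //].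
by left; rewrite mem_cat (map_f (fun j => mulw w (varw j))) ?orbT ?mem_enum.
Qed.

Hypothesis adm : admissible prec.

Lemma Rstep_R_invariant s t : Rstep prec H s t -> R_invariant s -> R_invariant t.
Proof.
case=> [L N G w _ _ _ | L N G w w' wL _ _ w'N w'_syn | L N G w wL w_min _ w_syn]
  [G_syn N_inj G_lt N_lt_L]; split=> //=.
- by move=> a x aN; rewrite mem_filter => /andP[_]; exact: N_lt_L.
- by move=> g; rewrite mem_rcons inE => /orP[/eqP-> | /G_syn].
- by move=> g; rewrite mem_rcons inE => /orP[/eqP-> | /G_lt] //=; exact: N_lt_L.
- by move=> a x aN; rewrite mem_filter => /andP[_]; exact: N_lt_L.
- move=> a b; rewrite !mem_rcons !inE => /orP[/eqP-> | aN] /orP[/eqP-> | bN] //.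
  + by move=> e; have := w_syn _ bN; rewrite e eqxx.
  + by move=> e; have := w_syn _ aN; rewrite e eqxx.
  + exact: N_inj.
- move=> a x; rewrite mem_rcons inE mem_cat mem_filter.
  case/orP=> [/eqP-> | aN] /orP[/andP[xw xL] | /mapP[i _ ->]].
  + by case: (w_min _ xL) => // x_w; rewrite x_w eqxx in xw.
  + exact: (lt_e_mulw adm w (varw_neq1 i)).
  + exact: N_lt_L.
  + exact: (lt_e_trans adm (N_lt_L a w aN wL) (lt_e_mulw adm w (varw_neq1 i))).
Qed.

Variables (N : seq (word n)) (G : seq (word n * word n)).
Hypothesis out : outputR prec H N G.

Lemma outputR_R_invariant : R_invariant ([::], N, G).
Proof. exact: star_preserved Rstep_R_invariant _ _ out (And4 _ _ _ _). Qed.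

Lemma outputR_covered_one : covered G N onew.
Proof.
have [] // : settled onew ([::], N, G).
  apply: star_preserved (fun s t => @Rstep_settled s t onew) _ _ out _.
  by left; rewrite mem_head.
Qed.

Lemma outputR_covered_successor v i : v \in N -> covered G N (mulw v (varw i)).
Proof.
have : successors_settled ([::], N, G).
  by apply: star_preserved Rstep_successors_settled _ _ out _.
by move=> /(_ v i) N_succ /N_succ[].
Qed.

End AlgorithmR.

Section Output.
Variables (n m : nat) (H : 'M['F_2]_(n, m)) (prec : rel (word n)).
Variables (N : seq (word n)) (G : seq (word n * word n)).
Hypothesis out : outputR prec H N G.

Lemma irreducible_in_output w : irreducible G w -> w \in N.
Proof.
have [c] := ubnP #|Ind w|; elim: c w => // c IHc w w_lt w_irr.
have [w1 | w_neq1] := eqVneq w onew.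
  case: (outputR_covered_one out); rewrite -w1 // => w_div.
  by case: (irreducible_lead_divides w_irr w_div).
have [v [i [w_vi v_lt]]] := standard_split (irreducible_standard w_irr) w_neq1.
have vN : v \in N.
  apply: IHc; first exact: leq_trans v_lt w_lt.
  by apply: (@irreducible_divisor _ _ v (varw i)); rewrite -w_vi.
case: (outputR_covered_successor out i vN); rewrite -w_vi // => w_div.
by case: (irreducible_lead_divides w_irr w_div).
Qed.

Hypothesis adm : admissible prec.

Lemma outputR_star_redG_syn w w' : star (redG G) w w' -> syn H w = syn H w'.
Proof. by have [G_syn _ _ _] := outputR_R_invariant adm out; exact: star_redG_syn. Qed.

Lemma irreducible_form_unique w w1 w2 :
  star (redG G) w w1 -> star (redG G) w w2 ->
  irreducible G w1 -> irreducible G w2 -> w1 = w2.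
Proof.
have [_ N_inj _ _] := outputR_R_invariant adm out.
move=> w_w1 w_w2 w1_irr w2_irr; apply: N_inj; rewrite ?irreducible_in_output //.
by rewrite -(outputR_star_redG_syn w_w1) (outputR_star_redG_syn w_w2).
Qed.

Lemma redG_noetherian : ~ exists f : nat -> word n, forall i, redG G (f i) (f i.+1).
Proof.
have [_ _ G_lt _] := outputR_R_invariant adm out.
case=> f f_red.
have f_inj : injective f.
  apply: (descending_chain_injective (lt_e_irr adm) (lt_e_trans adm)) => i.
  exact: redG_lt_e adm G_lt (f_red i).
pose p q := if standard (f (2 * q)%N) then (2 * q)%N else (2 * q).+1.
apply: (@not_injective_standard _ (f \o p)) => [q |].
  by rewrite /p /=; case: ifP => // /negbT; exact: redG_nonstandard (f_red _).
by apply: inj_comp f_inj _ => q l; rewrite /p; do 2 case: ifP => _; lia.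
Qed.

End Output.

Theorem theorem3p5 (n k : nat) (H : 'M['F_2]_(n, n - k))
  (prec : rel (word n)) (N : seq (word n)) (G : seq (word n * word n)) :
  (k <= n)%N -> \rank H = (n - k)%N ->
  admissible prec -> outputR prec H N G ->
  [/\ ~ (exists f : nat -> word n, forall i, redG G (f i) (f i.+1)),
      (forall w w1 w2, star (redG G) w w1 -> star (redG G) w w2 ->
         irreducible G w1 -> irreducible G w2 -> w1 = w2),
      (forall w, irreducible G w -> w \in N)
    & (forall w w', star (redG G) w w' -> syn H w = syn H w')].
Proof.
move=> _ _ adm out; split.
- exact: redG_noetherian out adm.
- exact: irreducible_form_unique out adm.
- exact: irreducible_in_output out.
- exact: outputR_star_redG_syn out adm.
Qed.
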